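(* In a synchronized communication system of $n$ robots, let $IR$ be its isolation-resilience and let $SN$ be the maximum possible number of starving robots in the system. Then $SN+IR=n-1$.
   Context: Model. A system consists of pairwise disjoint unit circles $C_1,\dots,C_n$ in the plane (trajectories) and a communication range $r>0$. Its communication graph $G$ has vertex set $\{C_1,\dots,C_n\}$, $C_i,C_j$ adjacent iff the distance between their centres is at most $2+r$. Positions on a circle are angles (mod $2\pi$). For an edge $(i,j)$, the link position $\phi_{ij}$ is the angle of the point of $C_i$ closest to $C_j$. A schedule $F=(f,g)$ assigns each circle a starting angle $f(C_i)$ and direction $g(C_i)\in\{1,-1\}$; a robot following it on $C_i$ is at $f(C_i)+g(C_i)2\pi t$ at time $t$. $F$ is a synchronization schedule if $g(C_i)=-g(C_j)$ for adjacent circles and robots following $F$ on adjacent $C_i,C_j$ are at $\phi_{ij},\phi_{ji}$ at exactly the same times. A synchronized communication system (SCS) consists of $n$ robots, initially one per circle, following a synchronization schedule, with the switching rule: when a robot on $C_i$ reaches $\phi_{ij}$ and $C_j$ is empty, it instantly passes to $C_j$ and follows the schedule of $C_j$; if $C_j$ has a robot, they meet and each stays on its circle. A partial SCS arises by letting some robots leave (possibly at different times); remaining robots never leave. A surviving robot $u$ starves if every time $u$ arrives at a link position $\phi_{ij}$ of its current circle $C_i$, the circle $C_j$ is empty; the system is in starvation state if all surviving robots starve. The isolation-resilience is the largest $k$ such that, whichever $k$ robots leave, the system does not fall into starvation state. The maximum possible number of starving robots is taken over all partial SCSs obtained from the given SCS by letting robots leave. *)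

From Stdlib Require Import Reals List Relations.
Open Scope R_scope.

Definition point := (R * R)%type.

Definition dist (p q : point) : R :=
  sqrt ((fst p - fst q) ^ 2 + (snd p - snd q) ^ 2).

(** A system: [n] unit circles C_0..C_{n-1}; circle [i] has centre [c i]
    and radius 1.  Pairwise disjoint (as point sets): centre distance > 2. *)
Definition disjoint_unit_circles (n : nat) (c : nat -> point) : Prop :=
  forall i j, (i < n)%nat -> (j < n)%nat -> i <> j -> dist (c i) (c j) > 2.

Definition adj (n : nat) (c : nat -> point) (r : R) (i j : nat) : Prop :=
  (i < n)%nat /\ (j < n)%nat /\ i <> j /\ dist (c i) (c j) <= 2 + r.

Definition connected_graph (n : nat) (c : nat -> point) (r : R) : Prop :=
  forall i j, (i < n)%nat -> (j < n)%nat -> clos_refl_trans nat (adj n c r) i j.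

(** [at_link c i j th]: the angle [th] (mod 2 pi) on C_i is the link position
    phi_ij, i.e. the point c_i + (cos th, sin th) of C_i is the point of C_i
    closest to C_j, namely c_i + (c_j - c_i)/|c_j - c_i|. *)
Definition at_link (c : nat -> point) (i j : nat) (th : R) : Prop :=
  cos th * dist (c i) (c j) = fst (c j) - fst (c i) /\
  sin th * dist (c i) (c j) = snd (c j) - snd (c i).

Definition sched (f g : nat -> R) (i : nat) (t : R) : R := f i + g i * (2 * PI * t).

Definition sync_schedule (n : nat) (c : nat -> point) (r : R) (f g : nat -> R) : Prop :=
  (forall i, (i < n)%nat -> g i = 1 \/ g i = -1) /\
  (forall i j, adj n c r i j ->
     g i = - g j /\
     (forall t, 0 <= t ->
        (at_link c i j (sched f g i t) <-> at_link c j i (sched f g j t)))).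

(** Robots are numbered by their initial circle: robot [u] starts on C_u.
    [leave u = Some s] : robot u leaves the system at time s (> 0), i.e. it is
    present exactly on [0, s); [leave u = None] : robot u never leaves.
    [loc u t] : index of the circle robot u is on at time t (right-continuous,
    i.e. after any switch happening at time t). *)

Definition present (leave : nat -> option R) (u : nat) (t : R) : Prop :=
  0 <= t /\ match leave u with None => True | Some s => t < s end.

Definition left_at (loc : nat -> R -> nat) (u : nat) (t : R) (i : nat) : Prop :=
  exists eps, eps > 0 /\ forall s, t - eps < s < t -> loc u s = i.

Definition empty_at (n : nat) (leave : nat -> option R) (loc : nat -> R -> nat)
    (j : nat) (t : R) : Prop :=
  forall v, (v < n)%nat -> present leave v t -> ~ left_at loc v t j.

Definition valid_leave (n : nat) (leave : nat -> option R) : Prop :=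
  forall u s, leave u = Some s -> 0 < s.

Definition run (n : nat) (c : nat -> point) (r : R) (f g : nat -> R)
    (leave : nat -> option R) (loc : nat -> R -> nat) : Prop :=
  (forall u, (u < n)%nat -> loc u 0 = u) /\
  (forall u t, (u < n)%nat -> (loc u t < n)%nat) /\
  (forall u t, (u < n)%nat -> 0 <= t ->
     exists eps, eps > 0 /\ forall s, t <= s < t + eps -> loc u s = loc u t) /\
  (forall u t, (u < n)%nat -> 0 < t -> exists i, left_at loc u t i) /\
  (forall u t i, (u < n)%nat -> 0 < t -> present leave u t -> left_at loc u t i ->
     (forall j, adj n c r i j -> at_link c i j (sched f g i t) ->
        empty_at n leave loc j t -> loc u t = j) /\
     ((forall j, adj n c r i j -> at_link c i j (sched f g i t) ->
        ~ empty_at n leave loc j t) -> loc u t = i)).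

(** Surviving robot u starves: (from some time on, i.e. in the partial SCS
    obtained after the departures) every time u arrives at a link position
    phi_ij of its current circle C_i, the circle C_j is empty. *)
Definition starves (n : nat) (c : nat -> point) (r : R) (f g : nat -> R)
    (leave : nat -> option R) (loc : nat -> R -> nat) (u : nat) : Prop :=
  (u < n)%nat /\ leave u = None /\
  exists T, forall t i j, T <= t -> 0 < t -> left_at loc u t i ->
     adj n c r i j -> at_link c i j (sched f g i t) -> empty_at n leave loc j t.

Definition starvation_state (n : nat) (c : nat -> point) (r : R) (f g : nat -> R)
    (leave : nat -> option R) (loc : nat -> R -> nat) : Prop :=
  forall u, (u < n)%nat -> leave u = None -> starves n c r f g leave loc u.

Definition leaving_set (n : nat) (leave : nat -> option R) (l : list nat) : Prop :=
  NoDup l /\ (forall u, In u l -> (u < n)%nat) /\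
  (forall u, (u < n)%nat -> (leave u <> None <-> In u l)) /\
  (forall u, (n <= u)%nat -> leave u = None).

Definition resilient_k (n : nat) (c : nat -> point) (r : R) (f g : nat -> R)
    (k : nat) : Prop :=
  forall (l : list nat) (leave : nat -> option R) (loc : nat -> R -> nat),
    length l = k -> leaving_set n leave l -> valid_leave n leave ->
    run n c r f g leave loc -> ~ starvation_state n c r f g leave loc.

Definition is_isolation_resilience (n : nat) (c : nat -> point) (r : R)
    (f g : nat -> R) (IR : nat) : Prop :=
  (IR <= n)%nat /\ resilient_k n c r f g IR /\
  (forall k, (k <= n)%nat -> resilient_k n c r f g k -> (k <= IR)%nat).

Definition is_max_starving (n : nat) (c : nat -> point) (r : R)
    (f g : nat -> R) (SN : nat) : Prop :=
  (exists (l0 : list nat) (leave : nat -> option R) (loc : nat -> R -> nat)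
          (l : list nat),
     leaving_set n leave l0 /\ valid_leave n leave /\ run n c r f g leave loc /\
     NoDup l /\ length l = SN /\ (forall u, In u l -> starves n c r f g leave loc u)) /\
  (forall (l0 : list nat) (leave : nat -> option R) (loc : nat -> R -> nat)
          (l : list nat),
     leaving_set n leave l0 -> valid_leave n leave -> run n c r f g leave loc ->
     NoDup l -> (forall u, In u l -> starves n c r f g leave loc u) ->
     (length l <= SN)%nat).

From Pilot Require Import Defs.
From Stdlib Require Import Reals List Relations Lra Lia Permutation Classical.
Open Scope R_scope.

(* Without departures the robots always occupy pairwise distinct circles: two
   robots could only meet by entering the same circle C_j at the same instant from
   two neighbours whose link positions on C_j coincide.  Such neighbours lie on one
   ray from the centre of C_j, hence are adjacent to each other, and three
   pairwise adjacent circles cannot have alternating directions.  So the full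
   system never starves, while it cannot survive the departure of all n robots.
   If a set S of robots starves in some partial system, letting every other robot
   leave before the robots of S have started starving does not change the
   evolution and gives a starvation state after n - |S| departures; hence
   SN + IR <= n - 1.  Conversely, a starvation state after IR + 1 departures makes
   the n - 1 - IR remaining robots starve. *)

Lemma bounded_nat_max (P : nat -> Prop) (N : nat) :
  (exists k, (k <= N)%nat /\ P k) ->
  exists m, (m <= N)%nat /\ P m /\ forall k, (k <= N)%nat -> P k -> (k <= m)%nat.
Proof.
  induction N as [|N IH]; intros [k [Hk Pk]].
  - exists 0%nat. replace k with 0%nat in Pk by lia. repeat split; auto; lia.
  - destruct (classic (P (S N))) as [HPN|HPN].
    + exists (S N). repeat split; auto.
    + assert (Hk' : k <> S N) by (intros ->; contradiction).
      destruct IH as [m [Hm [Pm Hmax]]]; [exists k; split; auto; lia|].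
      exists m. repeat split; auto.
      intros k' Hk'' Pk'. assert (k' <> S N) by (intros ->; contradiction).
      apply Hmax; auto; lia.
Qed.

Lemma NoDup_bounded_length (l : list nat) (n : nat) :
  NoDup l -> (forall u, In u l -> (u < n)%nat) -> (length l <= n)%nat.
Proof.
  intros Hl Hb. rewrite <- (length_seq n 0).
  apply NoDup_incl_length; auto. intros x Hx. apply in_seq. specialize (Hb x Hx). lia.
Qed.

Lemma injective_bounded_surjective (n : nat) (h : nat -> nat) :
  (forall u, (u < n)%nat -> (h u < n)%nat) ->
  (forall u v, (u < n)%nat -> (v < n)%nat -> h u = h v -> u = v) ->
  forall j, (j < n)%nat -> exists v, (v < n)%nat /\ h v = j.
Proof.
  intros Hb Hinj j Hj.
  assert (Hincl : incl (seq 0 n) (map h (seq 0 n))).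
  { apply NoDup_length_incl.
    - apply NoDup_map_NoDup_ForallPairs; [|apply seq_NoDup].
      intros x y Hx Hy. apply in_seq in Hx, Hy. apply Hinj; lia.
    - rewrite length_map. lia.
    - intros x Hx. apply in_map_iff in Hx as [v [<- Hv]]. apply in_seq in Hv.
      apply in_seq. specialize (Hb v). lia. }
  destruct (in_map_iff h (seq 0 n) j) as [Hm _].
  destruct Hm as [v [Hv Hin]]; [apply Hincl, in_seq; lia|].
  apply in_seq in Hin. exists v. split; [lia|auto].
Qed.

Definition complement (n : nat) (l : list nat) : list nat :=
  filter (fun u => if in_dec Nat.eq_dec u l then false else true) (seq 0 n).

Lemma In_complement n l u : In u (complement n l) <-> (u < n)%nat /\ ~ In u l.
Proof.
  unfold complement. rewrite filter_In, in_seq.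
  destruct (in_dec Nat.eq_dec u l); intuition (try lia; discriminate).
Qed.

Lemma NoDup_complement n l : NoDup (complement n l).
Proof. apply NoDup_filter, seq_NoDup. Qed.

Lemma length_complement n l :
  NoDup l -> (forall u, In u l -> (u < n)%nat) ->
  length (complement n l) = (n - length l)%nat.
Proof.
  intros Hl Hb.
  set (p u := if in_dec Nat.eq_dec u l then true else false).
  assert (Hsplit := filter_length p (seq 0 n)). rewrite length_seq in Hsplit.
  assert (Hin : length (filter p (seq 0 n)) = length l).
  { apply Permutation_length, NoDup_Permutation; auto using NoDup_filter, seq_NoDup.
    intros x. rewrite filter_In, in_seq. unfold p.
    destruct (in_dec Nat.eq_dec x l) as [Hx|Hx]; split; try tauto.
    - intros _. split; auto. specialize (Hb x Hx). lia.
    - intros [_ H]; discriminate. }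
  unfold complement. fold p.
  replace (filter (fun u => if in_dec Nat.eq_dec u l then false else true) (seq 0 n))
    with (filter (fun u => negb (p u)) (seq 0 n)); [lia|].
  apply filter_ext. intros u. unfold p. now destruct (in_dec Nat.eq_dec u l).
Qed.

Lemma In_firstn (A : Type) m (l : list A) x : In x (firstn m l) -> In x l.
Proof. intros H. rewrite <- (firstn_skipn m l). apply in_or_app. auto. Qed.

Lemma NoDup_firstn (A : Type) m (l : list A) : NoDup l -> NoDup (firstn m l).
Proof. intros H. rewrite <- (firstn_skipn m l) in H. eapply NoDup_app_remove_r; eauto. Qed.

Lemma uniform_eps (n : nat) (Q : nat -> R -> Prop) :
  (forall u e e', Q u e -> 0 < e' <= e -> Q u e') ->
  (forall u, (u < n)%nat -> exists e, e > 0 /\ Q u e) ->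
  exists e, e > 0 /\ forall u, (u < n)%nat -> Q u e.
Proof.
  intros Hmono. induction n as [|n IH]; intros H.
  - exists 1. split; [lra|]. intros; lia.
  - destruct IH as [e [He HQ]]; [intros; apply H; lia|].
    destruct (H n ltac:(lia)) as [e1 [He1 HQ1]].
    assert (Hm : 0 < Rmin e e1) by (apply Rmin_glb_lt; auto).
    exists (Rmin e e1). split; auto.
    intros u Hu. destruct (Nat.eq_dec u n) as [->|Hne].
    + apply (Hmono _ e1); auto. split; [auto|apply Rmin_r].
    + apply (Hmono _ e); [apply HQ; lia|]. split; [auto|apply Rmin_l].
Qed.

Lemma real_induction (P : R -> Prop) :
  (forall t, 0 <= t -> (forall s, 0 <= s < t -> P s) -> P t) ->
  (forall t, 0 <= t -> P t -> exists e, e > 0 /\ forall s, t <= s < t + e -> P s) ->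
  forall t, 0 <= t -> P t.
Proof.
  intros Hstep Hright t0 Ht0. apply NNPP. intros Hbad.
  set (E x := 0 <= x /\ forall s, 0 <= s <= x -> P s).
  assert (HE0 : E 0).
  { split; [lra|]. intros s Hs. apply Hstep; [lra|]. intros; lra. }
  assert (Hb : bound E).
  { exists t0. intros x [Hx Hxs]. apply Rnot_lt_le. intros Hlt. apply Hbad, Hxs. lra. }
  destruct (completeness E Hb (ex_intro _ 0 HE0)) as [tau [Hub Hlub]].
  assert (Htau : 0 <= tau) by (apply Hub; auto).
  assert (Hbelow : forall s, 0 <= s < tau -> P s).
  { intros s Hs. apply NNPP. intros Hn. assert (tau <= s); [|lra].
    apply Hlub. intros x [Hx Hxs]. apply Rnot_lt_le. intros Hlt. apply Hn, Hxs. lra. }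
  destruct (Hright tau Htau (Hstep tau Htau Hbelow)) as [e [He Hafter]].
  assert (Hbeyond : E (tau + e / 2)).
  { split; [lra|]. intros s Hs. destruct (Rlt_or_le s tau).
    - apply Hbelow; lra.
    - apply Hafter; lra. }
  assert (tau + e / 2 <= tau) by (apply Hub; auto). lra.
Qed.

Lemma dist_sym p q : Defs.dist p q = Defs.dist q p.
Proof. unfold Defs.dist. f_equal. ring. Qed.

Lemma dist_nonneg p q : 0 <= Defs.dist p q.
Proof. apply sqrt_pos. Qed.

Lemma adj_sym n c r i j : adj n c r i j -> adj n c r j i.
Proof. intros (Hi & Hj & Hij & Hd). rewrite dist_sym in Hd. repeat split; auto. Qed.

(* Two neighbours of C_j seen at the same angle lie on one ray from c_j, so
   their distance is the difference of their distances to c_j: they are adjacent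
   to each other, and the three directions cannot alternate along a triangle. *)
Lemma at_link_injective n c r f g j a b th :
  sync_schedule n c r f g -> adj n c r j a -> adj n c r j b ->
  at_link c j a th -> at_link c j b th -> a = b.
Proof.
  intros [Hg Hs] Ha Hb [Ca Sa] [Cb Sb].
  destruct (Nat.eq_dec a b) as [|Hab]; [auto|exfalso].
  destruct (Hs _ _ Ha) as [Ga _], (Hs _ _ Hb) as [Gb _].
  set (da := Defs.dist (c j) (c a)) in *. set (db := Defs.dist (c j) (c b)) in *.
  assert (Hdab : Defs.dist (c a) (c b) = Rabs (da - db)).
  { unfold Defs.dist at 1. rewrite <- sqrt_Rsqr_abs. f_equal.
    replace (fst (c a) - fst (c b)) with (cos th * (da - db)) by lra.
    replace (snd (c a) - snd (c b)) with (sin th * (da - db)) by lra.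
    pose proof (sin2_cos2 th) as E. unfold Rsqr in *.
    replace ((cos th * (da - db)) ^ 2 + (sin th * (da - db)) ^ 2)
      with ((da - db) * (da - db) * (sin th * sin th + cos th * cos th)) by ring.
    rewrite E. ring. }
  assert (Hda : 0 <= da) by apply dist_nonneg. assert (Hdb : 0 <= db) by apply dist_nonneg.
  destruct Ha as (_ & Han & _ & Ha), Hb as (_ & Hbn & _ & Hb).
  assert (Hadj : adj n c r a b).
  { repeat split; auto. rewrite Hdab. fold da in Ha. fold db in Hb.
    unfold Rabs; destruct (Rcase_abs (da - db)); lra. }
  destruct (Hs _ _ Hadj) as [Gab _].
  destruct (Hg a Han); lra.
Qed.

Lemma unit_vector_angle (a b : R) :
  a * a + b * b = 1 -> exists th, cos th = a /\ sin th = b.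
Proof.
  intros H.
  assert (Ha : -1 <= a <= 1) by nra.
  assert (Hs : sqrt (1 - a²) = Rabs b).
  { rewrite <- sqrt_Rsqr_abs. f_equal. unfold Rsqr. lra. }
  destruct (Rle_or_lt 0 b) as [Hb|Hb].
  - exists (acos a). rewrite cos_acos, sin_acos by auto. split; auto.
    rewrite Hs. apply Rabs_right; lra.
  - exists (- acos a). rewrite cos_neg, sin_neg, cos_acos, sin_acos by auto. split; auto.
    rewrite Hs, Rabs_left; lra.
Qed.

Lemma link_angle_exists (c : nat -> point) i j :
  Defs.dist (c i) (c j) > 0 -> exists th, forall x,
    cos x = cos th -> sin x = sin th -> at_link c i j x.
Proof.
  intros Hd. set (d := Defs.dist (c i) (c j)) in *.
  set (dx := fst (c j) - fst (c i)). set (dy := snd (c j) - snd (c i)).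
  assert (Hdd : d * d = dx * dx + dy * dy).
  { unfold d, Defs.dist. rewrite sqrt_sqrt; [unfold dx, dy; ring|].
    apply Rplus_le_le_0_compat; apply pow2_ge_0. }
  destruct (unit_vector_angle (dx / d) (dy / d)) as [th [Ca Sa]].
  { replace (dx / d * (dx / d) + dy / d * (dy / d)) with ((dx * dx + dy * dy) / (d * d))
      by (field; lra).
    rewrite <- Hdd. field. lra. }
  exists th. intros x Cx Sx. unfold at_link. fold d.
  rewrite Cx, Sx, Ca, Sa. fold dx dy. split; field; lra.
Qed.

Lemma cos_sin_shift x th (m : nat) :
  x = th + 2 * INR m * PI \/ th = x + 2 * INR m * PI -> cos x = cos th /\ sin x = sin th.
Proof. intros [-> | ->]; rewrite cos_period, sin_period; auto. Qed.

Lemma sched_reaches_angle f g i th (T : R) :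
  g i = 1 \/ g i = -1 ->
  exists t, T <= t /\ 0 < t /\ cos (sched f g i t) = cos th /\ sin (sched f g i t) = sin th.
Proof.
  intros Hg. assert (HPI := PI_RGT_0).
  set (t0 := g i * (th - f i) / (2 * PI)).
  destruct (INR_unbounded (Rabs T + Rabs t0 + 1)) as [m Hm].
  pose proof (Rle_abs T). pose proof (Rle_abs (- t0)). rewrite Rabs_Ropp in *.
  pose proof (Rabs_pos T).
  exists (t0 + INR m). split; [lra|split; [lra|]].
  apply cos_sin_shift with m; unfold sched, t0.
  destruct Hg as [-> | ->]; [left | right]; field; lra.
Qed.

Lemma link_reached_late n c r f g i j (T : R) :
  sync_schedule n c r f g -> disjoint_unit_circles n c -> adj n c r i j ->
  exists t, T <= t /\ 0 < t /\ at_link c i j (sched f g i t).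
Proof.
  intros [Hg _] Hdis (Hi & Hj & Hij & _).
  destruct (link_angle_exists c i j) as [th Hth].
  { assert (Defs.dist (c i) (c j) > 2) by (apply Hdis; auto). lra. }
  destruct (sched_reaches_angle f g i th T (Hg i Hi)) as (t & HT & Ht & Hc & Hs).
  exists t. auto.
Qed.

Lemma uniform_starvation_time n c r f g leave loc l :
  (forall u, In u l -> starves n c r f g leave loc u) ->
  exists T, 0 < T /\ forall u, In u l -> forall t i j, T <= t -> 0 < t -> left_at loc u t i ->
     adj n c r i j -> at_link c i j (sched f g i t) -> empty_at n leave loc j t.
Proof.
  induction l as [|a l IH]; intros Hst.
  - exists 1. split; [lra|]. intros u [].
  - destruct IH as [T [HT HTl]]; [intros; apply Hst; right; auto|].
    destruct (Hst a (or_introl eq_refl)) as (_ & _ & Ta & HTa).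
    pose proof (Rmax_l T Ta). pose proof (Rmax_r T Ta).
    exists (Rmax T Ta). split; [lra|].
    intros u [<-|Hu] t i j Ht.
    + apply HTa. lra.
    + apply HTl; auto. lra.
Qed.

Section Run.
Variables (n : nat) (c : nat -> point) (r : R) (f g : nat -> R)
  (leave : nat -> option R) (loc : nat -> R -> nat).
Hypothesis Hrun : run n c r f g leave loc.

Lemma run_left_limit (t : R) : 0 < t ->
  exists s, 0 <= s < t /\ forall u, (u < n)%nat -> left_at loc u t (loc u s).
Proof.
  intros Ht. destruct Hrun as (_ & _ & _ & Hleft & _).
  destruct (uniform_eps n (fun u e => forall s1 s2,
              t - e < s1 < t -> t - e < s2 < t -> loc u s1 = loc u s2)) as [e [He Hconst]].
  - intros u e e' H [H1 H2] s1 s2 A B. apply H; lra.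
  - intros u Hu. destruct (Hleft u t Hu Ht) as [i [e [He Hi]]]. exists e. split; auto.
    intros s1 s2 A B. rewrite (Hi s1 A), (Hi s2 B). auto.
  - pose proof (Rmin_l e t). pose proof (Rmin_r e t).
    assert (0 < Rmin e t) by (apply Rmin_glb_lt; auto).
    exists (t - Rmin e t / 2). split; [lra|]. intros u Hu. exists e. split; auto.
    intros s Hs. apply Hconst; auto. lra.
Qed.

Lemma run_switch_or_stay u t i : (u < n)%nat -> 0 < t -> present leave u t ->
  left_at loc u t i ->
  (exists j, adj n c r i j /\ at_link c i j (sched f g i t) /\
     empty_at n leave loc j t /\ loc u t = j) \/ loc u t = i.
Proof.
  intros Hu Ht Hp Hi. destruct Hrun as (_ & _ & _ & _ & Hrule).
  destruct (Hrule u t i Hu Ht Hp Hi) as [Hswitch Hstay].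
  destruct (classic (exists j, adj n c r i j /\ at_link c i j (sched f g i t) /\
                               empty_at n leave loc j t)) as [(j & A & B & C)|Hnone].
  - left. exists j. split; [auto|split; [auto|split; [auto|apply Hswitch; auto]]].
  - right. apply Hstay. intros j A B C. apply Hnone. exists j; auto.
Qed.

Definition distinct_circles (t : R) : Prop :=
  forall u v, (u < n)%nat -> (v < n)%nat -> loc u t = loc v t -> u = v.

Lemma distinct_circles_right (t : R) : 0 <= t -> distinct_circles t ->
  exists e, e > 0 /\ forall s, t <= s < t + e -> distinct_circles s.
Proof.
  intros Ht Hd. destruct Hrun as (_ & _ & Hright & _).
  destruct (uniform_eps n (fun u e => forall s, t <= s < t + e -> loc u s = loc u t))
    as [e [He Hconst]].
  - intros u e e' H [H1 H2] s A. apply H; lra.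
  - intros u Hu. apply Hright; auto.
  - exists e. split; auto. intros s Hs u v Hu Hv E. apply Hd; auto.
    rewrite <- (Hconst u Hu s), <- (Hconst v Hv s); auto.
Qed.

Hypothesis Hsync : sync_schedule n c r f g.
Hypothesis Hstay : forall u, leave u = None.

Lemma present_always u t : 0 <= t -> present leave u t.
Proof. intros Ht. split; auto. rewrite Hstay. auto. Qed.

(* Two robots can only meet on C_j by entering it simultaneously from two
   neighbours, which [at_link_injective] forbids. *)
Lemma distinct_circles_step (t : R) : 0 < t ->
  (forall s, 0 <= s < t -> distinct_circles s) -> distinct_circles t.
Proof.
  intros Ht Hbefore. destruct (run_left_limit t Ht) as [s [Hs Hleft]].
  assert (Hds : distinct_circles s) by (apply Hbefore; lra).
  pose proof (fun u Hu => run_switch_or_stay u t (loc u s) Hu Ht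
                            (present_always u t ltac:(lra)) (Hleft u Hu)) as Hmove.
  intros u v Hu Hv E.
  destruct (Hmove u Hu) as [(j & A & B & C & D)|D];
  destruct (Hmove v Hv) as [(j' & A' & B' & C' & D')|D'].
  - apply Hds; auto. replace j' with j in * by congruence.
    destruct Hsync as [_ Hlink].
    apply (at_link_injective n c r f g j _ _ (sched f g j t) Hsync).
    + apply adj_sym; auto.
    + apply adj_sym; auto.
    + apply (proj2 (Hlink _ _ A)); [lra|auto].
    + apply (proj2 (Hlink _ _ A')); [lra|auto].
  - exfalso. apply (C v Hv (present_always v t ltac:(lra))).
    replace j with (loc v s) by congruence. apply Hleft; auto.
  - exfalso. apply (C' u Hu (present_always u t ltac:(lra))).
    replace j' with (loc u s) by congruence. apply Hleft; auto.
  - apply Hds; auto. congruence.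
Qed.

Lemma distinct_circles_always t : 0 <= t -> distinct_circles t.
Proof.
  apply real_induction; [|apply distinct_circles_right].
  intros s Hs Hbefore. destruct (Rle_lt_or_eq_dec 0 s Hs) as [Hpos|<-].
  - apply distinct_circles_step; auto.
  - destruct Hrun as (Hinit & _). intros u v Hu Hv E.
    rewrite (Hinit u Hu), (Hinit v Hv) in E. auto.
Qed.

End Run.

Lemma connected_neighbour n c r i : (2 <= n)%nat -> connected_graph n c r -> (i < n)%nat ->
  exists j, adj n c r i j.
Proof.
  intros Hn Hcon Hi.
  assert (Hk : exists k, k <> i /\ (k < n)%nat)
    by (destruct (Nat.eq_dec i 0); [exists 1%nat | exists 0%nat]; lia).
  destruct Hk as [k [Hki Hk]].
  destruct (clos_rt_rt1n _ _ _ _ (Hcon i k Hi Hk)) as [|j k' Hij _]; [lia|eauto].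
Qed.

(* With no departures every circle stays occupied, so a robot reaching a link
   position always meets the robot of the neighbouring circle. *)
Lemma resilient_0 n c r f g :
  (2 <= n)%nat -> disjoint_unit_circles n c -> connected_graph n c r ->
  sync_schedule n c r f g -> resilient_k n c r f g 0.
Proof.
  intros Hn Hdis Hcon Hsync l leave loc Hlen Hls _ Hrun Hstarve.
  destruct l; [|discriminate].
  destruct Hls as (_ & _ & Hin & Hbig).
  assert (Hstay : forall u, leave u = None).
  { intros u. destruct (Nat.lt_ge_cases u n) as [Hu|Hu]; [|apply Hbig; auto].
    apply NNPP. intros H. apply (proj1 (Hin u Hu) H). }
  destruct (connected_neighbour n c r 0 Hn Hcon ltac:(lia)) as [j Hadj].
  assert (Hj : (j < n)%nat) by apply Hadj.
  destruct (uniform_starvation_time n c r f g leave loc (seq 0 n)) as [T [HT Hempty]].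
  { intros u Hu. apply in_seq in Hu. apply Hstarve; [lia|auto]. }
  destruct (link_reached_late n c r f g 0 j T Hsync Hdis Hadj) as (t & HTt & Ht & Hlink).
  destruct (run_left_limit n c r f g leave loc Hrun t Ht) as [s [Hs Hleft]].
  pose proof (distinct_circles_always n c r f g leave loc Hrun Hsync Hstay s ltac:(lra))
    as Hdistinct.
  destruct Hrun as (_ & Hbound & _).
  destruct (injective_bounded_surjective n (fun u => loc u s) (fun u Hu => Hbound u s Hu)
              Hdistinct 0%nat ltac:(lia)) as [v [Hv Ev]].
  destruct (injective_bounded_surjective n (fun u => loc u s) (fun u Hu => Hbound u s Hu)
              Hdistinct j Hj) as [w [Hw Ew]].
  apply (Hempty v (proj2 (in_seq n 0 v) ltac:(lia)) t 0%nat j HTt Ht) with w; auto.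
  - rewrite <- Ev. apply Hleft; auto.
  - apply present_always; auto. lra.
  - rewrite <- Ew. apply Hleft; auto.
Qed.

Definition leave_all_but (n : nat) (l : list nat) (T : R) (leave : nat -> option R)
    (u : nat) : option R :=
  if in_dec Nat.eq_dec u (complement n l)
  then Some (match leave u with Some s => Rmin s T | None => T end)
  else leave u.

Section LeaveAllBut.
Variables (n : nat) (c : nat -> point) (r : R) (f g : nat -> R)
  (leave : nat -> option R) (loc : nat -> R -> nat) (l0 l : list nat) (T : R).
Hypothesis Hls : leaving_set n leave l0.
Hypothesis Hval : valid_leave n leave.
Hypothesis HT : 0 < T.
Hypothesis Hl : forall u, In u l -> (u < n)%nat /\ leave u = None.

Let leave' := leave_all_but n l T leave.

Lemma leave_all_but_None u : ~ In u (complement n l) -> leave' u = None.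
Proof.
  intros Hu. unfold leave', leave_all_but. destruct (in_dec Nat.eq_dec u (complement n l));
    [contradiction|].
  destruct (Nat.lt_ge_cases u n) as [Hun|Hun].
  - apply Hl. apply NNPP. intros Hnl. apply Hu, In_complement. auto.
  - apply Hls; auto.
Qed.

Lemma leaving_set_leave_all_but : leaving_set n leave' (complement n l).
Proof.
  split; [apply NoDup_complement|split; [|split]].
  - intros u Hu. apply In_complement in Hu. tauto.
  - intros u Hu. split.
    + intros Hne. apply NNPP. intros Hnot. apply Hne, leave_all_but_None; auto.
    + intros Hin. unfold leave', leave_all_but. destruct in_dec; [discriminate|contradiction].
  - intros u Hu. apply leave_all_but_None. rewrite In_complement. lia.
Qed.

Lemma valid_leave_all_but : valid_leave n leave'.
Proof.
  intros u s. unfold leave', leave_all_but. destruct in_dec; [|apply Hval].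
  destruct (leave u) eqn:E; intros [= <-]; auto.
  apply Rmin_glb_lt; auto. apply (Hval u); auto.
Qed.

Lemma present_leave_all_but u t : present leave' u t -> present leave u t.
Proof.
  unfold present, leave', leave_all_but. destruct in_dec; [|auto].
  destruct (leave u); [|tauto]. pose proof (Rmin_l r0 T). intuition lra.
Qed.

Lemma present_leave_all_but_early u t : t < T -> present leave u t -> present leave' u t.
Proof.
  unfold present, leave', leave_all_but. intros Ht. destruct in_dec; [|auto].
  destruct (leave u); [|tauto]. intuition. apply Rmin_glb_lt; auto.
Qed.

Lemma present_leave_all_but_late u t : T <= t -> present leave' u t -> ~ In u (complement n l).
Proof.
  unfold present, leave', leave_all_but. intros Ht. destruct in_dec; [|auto].
  destruct (leave u); [|lra]. pose proof (Rmin_r r0 T). lra.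
Qed.

Hypothesis Hrun : run n c r f g leave loc.
Hypothesis Hstarve : forall u, In u l -> forall t i j, T <= t -> 0 < t -> left_at loc u t i ->
  adj n c r i j -> at_link c i j (sched f g i t) -> empty_at n leave loc j t.

Lemma empty_at_leave_all_but j t : empty_at n leave loc j t -> empty_at n leave' loc j t.
Proof. intros He v Hv Hp. apply He, present_leave_all_but; auto. Qed.

Lemma empty_at_leave_all_but_early j t :
  t < T -> empty_at n leave' loc j t -> empty_at n leave loc j t.
Proof. intros Ht He v Hv Hp. apply He, present_leave_all_but_early; auto. Qed.

(* Before [T] nothing changes; afterwards only the robots of [l] remain and
   every switch they make is to an empty circle, so [loc] is still an evolution. *)
Lemma run_leave_all_but : run n c r f g leave' loc.
Proof.
  destruct Hrun as (Hinit & Hbound & Hright & Hleft & Hrule).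
  do 4 (split; [assumption|]).
  intros u t i Hu Ht Hp Hi.
  destruct (Hrule u t i Hu Ht (present_leave_all_but u t Hp) Hi) as [Hswitch Hstay].
  split.
  - intros j Hadj Hlink He. apply Hswitch; auto.
    destruct (Rlt_or_le t T) as [Hearly|Hlate].
    + apply empty_at_leave_all_but_early; auto.
    + apply (Hstarve u) with i; auto.
      apply NNPP. intros Hnl. apply (present_leave_all_but_late u t Hlate Hp).
      apply In_complement. auto.
  - intros Hocc. apply Hstay. intros j Hadj Hlink He. apply (Hocc j Hadj Hlink).
    apply empty_at_leave_all_but; auto.
Qed.

Lemma starvation_state_leave_all_but : starvation_state n c r f g leave' loc.
Proof.
  intros u Hu Hnone.
  assert (Hin : In u l).
  { apply NNPP. intros Hnl. unfold leave', leave_all_but in Hnone.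
    destruct in_dec as [_|Hc]; [discriminate|]. apply Hc, In_complement. auto. }
  split; [auto|split; [auto|]]. exists T. intros t i j Ht Ht0 Hi Hadj Hlink.
  apply empty_at_leave_all_but, (Hstarve u Hin t i j); auto.
Qed.

End LeaveAllBut.

Lemma starving_robots_not_resilient n c r f g l0 leave loc l :
  leaving_set n leave l0 -> valid_leave n leave -> run n c r f g leave loc -> NoDup l ->
  (forall u, In u l -> starves n c r f g leave loc u) ->
  ~ resilient_k n c r f g (n - length l).
Proof.
  intros Hls Hval Hrun Hnd Hst Hres.
  destruct (uniform_starvation_time n c r f g leave loc l Hst) as [T [HT Hstarve]].
  assert (Hl : forall u, In u l -> (u < n)%nat /\ leave u = None)
    by (intros u Hu; destruct (Hst u Hu) as (? & ? & _); auto).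
  apply (Hres (complement n l) (leave_all_but n l T leave) loc).
  - apply length_complement; auto. intros u Hu. apply Hl; auto.
  - eapply leaving_set_leave_all_but; eauto.
  - eapply valid_leave_all_but; eauto.
  - eapply run_leave_all_but; eauto.
  - eapply starvation_state_leave_all_but; eauto.
Qed.

Lemma run_without_departures n c r f g : run n c r f g (fun _ => None) (fun u _ => u).
Proof.
  split; [auto|split; [auto|split; [|split]]].
  - intros u t _ _. exists 1. split; [lra|auto].
  - intros u t _ _. exists u, 1. split; [lra|auto].
  - intros u t i Hu Ht Hp [e [He Hi]].
    assert (u = i) as <- by (apply (Hi (t - e / 2)); lra).
    split; [|auto].
    intros j (_ & Hj & _) _ Hempty. exfalso.
    apply (Hempty j Hj); [split; [lra|auto]|].
    exists 1. split; [lra|auto].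
Qed.

Lemma not_resilient_n n c r f g : ~ resilient_k n c r f g n.
Proof.
  rewrite <- (Nat.sub_0_r n) at 2.
  apply (starving_robots_not_resilient n c r f g nil (fun _ => None) (fun u _ => u) nil).
  - repeat split; try (intros; discriminate || contradiction); auto using NoDup_nil.
  - intros u s H. discriminate.
  - apply run_without_departures.
  - apply NoDup_nil.
  - intros u [].
Qed.

Definition has_starving (n : nat) (c : nat -> point) (r : R) (f g : nat -> R) (m : nat) : Prop :=
  exists (l0 : list nat) (leave : nat -> option R) (loc : nat -> R -> nat) (l : list nat),
    leaving_set n leave l0 /\ valid_leave n leave /\ run n c r f g leave loc /\
    NoDup l /\ length l = m /\ (forall u, In u l -> starves n c r f g leave loc u).

Lemma has_starving_le n c r f g m : has_starving n c r f g m -> (m <= n)%nat.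
Proof.
  intros (l0 & leave & loc & l & _ & _ & _ & Hnd & <- & Hst).
  apply NoDup_bounded_length; auto. intros u Hu. apply (Hst u Hu).
Qed.

Lemma has_starving_not_resilient n c r f g k :
  ~ resilient_k n c r f g k -> has_starving n c r f g (n - k).
Proof.
  intros Hnot.
  assert (Hstate : exists l leave loc, length l = k /\ leaving_set n leave l /\
            valid_leave n leave /\ run n c r f g leave loc /\
            starvation_state n c r f g leave loc).
  { apply NNPP. intros H. apply Hnot. intros l leave loc A B C D E. apply H.
    exists l, leave, loc. auto. }
  destruct Hstate as (l & leave & loc & <- & Hls & Hval & Hrun & Hstate).
  exists l, leave, loc, (complement n l).
  split; [exact Hls|]. do 2 (split; [assumption|]).
  split; [apply NoDup_complement|].
  destruct Hls as (Hnd & Hb & Hin & _).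
  split; [apply length_complement; auto|].
  intros u Hu. apply In_complement in Hu as [Hun Hnl]. apply Hstate; auto.
  apply NNPP. intros Hne. apply Hnl, Hin; auto.
Qed.

Lemma has_starving_resilient_lt n c r f g m k :
  has_starving n c r f g m -> resilient_k n c r f g k -> (k <= n)%nat -> (m + k < n)%nat.
Proof.
  intros (l0 & leave & loc & l & Hls & Hval & Hrun & Hnd & <- & Hst) Hres Hk.
  apply Nat.nle_gt. intros Hge.
  apply (starving_robots_not_resilient n c r f g l0 leave loc (firstn (n - k) l));
    auto using NoDup_firstn.
  - intros u Hu. apply Hst. eapply In_firstn; eauto.
  - rewrite length_firstn. replace (n - Nat.min (n - k) (length l))%nat with k by lia. auto.
Qed.

Theorem lemma15 (n : nat) (c : nat -> point) (r : R) (f g : nat -> R) :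
  (2 <= n)%nat -> 0 < r ->
  disjoint_unit_circles n c ->
  connected_graph n c r ->
  sync_schedule n c r f g ->
  exists IR SN : nat,
    is_isolation_resilience n c r f g IR /\
    is_max_starving n c r f g SN /\
    (SN + IR = n - 1)%nat.
Proof.
  intros Hn _ Hdis Hcon Hsync.
  destruct (bounded_nat_max (resilient_k n c r f g) n) as (IR & HIRn & HIR & HIRmax).
  { exists 0%nat. split; [lia|]. apply resilient_0; auto. }
  assert (HIRlt : (IR < n)%nat).
  { destruct (Nat.eq_dec IR n) as [->|]; [exfalso; apply (not_resilient_n n c r f g HIR)|lia]. }
  assert (HSIR : has_starving n c r f g (n - S IR)).
  { apply has_starving_not_resilient. intros H. specialize (HIRmax (S IR) HIRlt H). lia. }
  destruct (bounded_nat_max (has_starving n c r f g) n) as (SN & _ & HSN & HSNmax).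
  { exists (n - S IR)%nat. split; [lia|auto]. }
  assert (Hlow : (n - S IR <= SN)%nat) by (apply HSNmax; auto; lia).
  assert (Hup : (SN + IR < n)%nat) by (apply (has_starving_resilient_lt n c r f g); auto).
  exists IR, SN. split; [|split].
  - repeat split; auto.
  - split; [exact HSN|]. intros l0 leave loc l A B C D E.
    assert (Hl : has_starving n c r f g (length l)) by (exists l0, leave, loc, l; intuition).
    apply HSNmax; auto. apply (has_starving_le n c r f g _ Hl).
  - lia.
Qed.
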